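(* Fix a tetrahedral erasure channel $W$. Then $A(W_n)=O(1/n)$ as $n\to\infty$; that is, there is a constant $C$ (depending on $W$) such that for every $n\ge1$, every $n$th-generation descendant $W'$ of $W$ satisfies $A(W')\le C/n$.
   Context: $\mathrm{TEC}(p,q,r,s,t)$ denotes a tetrahedral erasure channel with parameters $p,q,r,s,t\ge0$ summing to $1$; its moment of inertia is $A=(q-r)^2+(r-s)^2+(s-q)^2$. For $W=\mathrm{TEC}(p,q,r,s,t)$, the serial child is $W^{s}=\mathrm{TEC}(p^2,\ ps+sq+qp,\ pq+qr+rp,\ pr+rs+sp,\ 1-\text{(sum of the other four)})$ and the parallel child is $W^{p}=\mathrm{TEC}(1-\text{(sum of the other four)},\ ts+sq+qt,\ tq+qr+rt,\ tr+rs+st,\ t^2)$. The $0$th-generation descendant of $W$ is $W$; the $n$th-generation descendants are the children of the $(n-1)$th-generation descendants. $W_n$ denotes a (uniformly random) $n$th-generation descendant obtained by choosing a child with probability $1/2$ at each step. *)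

From Stdlib Require Import Reals List.
Open Scope R_scope.

Record TEC : Type := mkTEC { tp : R; tq : R; tr : R; ts : R; tt : R }.

Definition is_TEC (W : TEC) : Prop :=
  0 <= tp W /\ 0 <= tq W /\ 0 <= tr W /\ 0 <= ts W /\ 0 <= tt W /\
  tp W + tq W + tr W + ts W + tt W = 1.

Definition inertia (W : TEC) : R :=
  (tq W - tr W)^2 + (tr W - ts W)^2 + (ts W - tq W)^2.

Definition serial_child (W : TEC) : TEC :=
  let p := tp W in let q := tq W in let r := tr W in let s := ts W in
  let p' := p^2 in
  let q' := p*s + s*q + q*p in
  let r' := p*q + q*r + r*p in
  let s' := p*r + r*s + s*p in
  mkTEC p' q' r' s' (1 - (p' + q' + r' + s')).

Definition parallel_child (W : TEC) : TEC :=
  let q := tq W in let r := tr W in let s := ts W in let t := tt W in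
  let q' := t*s + s*q + q*t in
  let r' := t*q + q*r + r*t in
  let s' := t*r + r*s + s*t in
  let t' := t^2 in
  mkTEC (1 - (q' + r' + s' + t')) q' r' s' t'.

(* The nth-generation
   descendants of W are exactly descendant W l for lists l of length n. *)
Fixpoint descendant (W : TEC) (l : list bool) : TEC :=
  match l with
  | nil => W
  | b :: l' => descendant (if b then serial_child W else parallel_child W) l'
  end.

(* The three differences of the serial child factor as (p+q)(s-r), (p+r)(q-s),
   (p+s)(r-q); since p+q <= 1-r-s and (1-r-s)^2 <= 1-(r-s)^2, each squared
   difference d^2 shrinks at least to d^2 - d^4, and Cauchy-Schwarz bounds the sum
   of the d^4 below by A^2/3. The parallel child is the serial child with the roles
   of p and t exchanged, so both children satisfy A' <= A - A^2/3, and such a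
   recursion forces A <= 3/n after n steps. *)
From Stdlib Require Import Reals List Lra Psatz.
Open Scope R_scope.

Lemma sqr_sum3_le (a b c : R) : (a + b + c)^2 <= 3 * (a^2 + b^2 + c^2).
Proof.
  pose proof (pow2_ge_0 (a - b)); pose proof (pow2_ge_0 (b - c));
  pose proof (pow2_ge_0 (c - a)); lra.
Qed.

Lemma mul_sqr_diff_le (f q r : R) :
  0 <= q -> 0 <= r -> 0 <= f -> f <= 1 - q - r ->
  f^2 * (q - r)^2 <= (q - r)^2 - ((q - r)^2)^2.
Proof.
  intros Hq Hr Hf Hfqr.
  assert (Hf2 : f^2 <= (1 - q - r)^2) by (apply pow_incr; lra).
  assert (Hqr : (1 - q - r)^2 <= 1 - (q - r)^2) by nra.
  assert (Hd : 0 <= (q - r)^2) by apply pow2_ge_0.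
  assert (f^2 * (q - r)^2 <= (1 - (q - r)^2) * (q - r)^2)
    by (apply Rmult_le_compat_r; lra).
  lra.
Qed.

Lemma decay_mul_succ_le (c x y N : R) :
  0 < c -> 0 <= N -> 0 <= y -> y <= x - x^2 / c -> x * N <= c ->
  y * (N + 1) <= c.
Proof.
  intros Hc HN Hy Hyx HxN.
  assert (Hyx' : y * c <= x * (c - x)).
  { apply (Rmult_le_compat_r c) in Hyx; [|lra].
    replace ((x - x^2 / c) * c) with (x * (c - x)) in Hyx by (field; lra).
    exact Hyx. }
  assert (Hx : 0 <= x <= c) by nra.
  assert (x * (c - x) * (N + 1) <= c * c).
  { pose proof (Rmult_le_pos (c - x * N) (c - x) ltac:(lra) ltac:(lra)). nra. }
  apply (Rmult_le_reg_r c); [exact Hc|].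
  assert (y * c * (N + 1) <= x * (c - x) * (N + 1))
    by (apply Rmult_le_compat_r; lra).
  lra.
Qed.

Lemma inertia_ge0 (W : TEC) : 0 <= inertia W.
Proof.
  unfold inertia.
  pose proof (pow2_ge_0 (tq W - tr W)); pose proof (pow2_ge_0 (tr W - ts W));
  pose proof (pow2_ge_0 (ts W - tq W)); lra.
Qed.

Lemma is_TEC_serial_child (W : TEC) : is_TEC W -> is_TEC (serial_child W).
Proof.
  destruct W as [p q r s t]; unfold is_TEC, serial_child; simpl.
  intros (Hp & Hq & Hr & Hs & Ht & Hsum); repeat split; nra.
Qed.

Lemma inertia_serial_child_le (W : TEC) :
  is_TEC W -> inertia (serial_child W) <= inertia W - inertia W ^ 2 / 3.
Proof.
  destruct W as [p q r s t]; unfold is_TEC, inertia, serial_child; simpl.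
  intros (Hp & Hq & Hr & Hs & Ht & Hsum).
  replace (((p*s + s*q + q*p) - (p*q + q*r + r*p))^2)
    with ((p + q)^2 * (r - s)^2) by ring.
  replace (((p*q + q*r + r*p) - (p*r + r*s + s*p))^2)
    with ((p + r)^2 * (s - q)^2) by ring.
  replace (((p*r + r*s + s*p) - (p*s + s*q + q*p))^2)
    with ((p + s)^2 * (q - r)^2) by ring.
  pose proof (mul_sqr_diff_le (p + q) r s Hr Hs ltac:(lra) ltac:(lra)).
  pose proof (mul_sqr_diff_le (p + r) s q Hs Hq ltac:(lra) ltac:(lra)).
  pose proof (mul_sqr_diff_le (p + s) q r Hq Hr ltac:(lra) ltac:(lra)).
  pose proof (sqr_sum3_le ((q - r)^2) ((r - s)^2) ((s - q)^2)).
  lra.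
Qed.

Definition swap_pt (W : TEC) : TEC := mkTEC (tt W) (tq W) (tr W) (ts W) (tp W).

Lemma is_TEC_swap_pt (W : TEC) : is_TEC W -> is_TEC (swap_pt W).
Proof.
  destruct W as [p q r s t]; unfold is_TEC; simpl; intros; lra.
Qed.

Lemma inertia_swap_pt (W : TEC) : inertia (swap_pt W) = inertia W.
Proof. reflexivity. Qed.

Lemma parallel_childE (W : TEC) :
  parallel_child W = swap_pt (serial_child (swap_pt W)).
Proof.
  destruct W as [p q r s t]; unfold parallel_child, serial_child, swap_pt; simpl.
  f_equal; ring.
Qed.

Definition child (b : bool) : TEC -> TEC :=
  if b then serial_child else parallel_child.

Lemma is_TEC_child (b : bool) (W : TEC) : is_TEC W -> is_TEC (child b W).
Proof.
  intros HW; destruct b; simpl.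
  - now apply is_TEC_serial_child.
  - rewrite parallel_childE.
    now apply is_TEC_swap_pt, is_TEC_serial_child, is_TEC_swap_pt.
Qed.

Lemma inertia_child_le (b : bool) (W : TEC) :
  is_TEC W -> inertia (child b W) <= inertia W - inertia W ^ 2 / 3.
Proof.
  intros HW; destruct b; simpl.
  - now apply inertia_serial_child_le.
  - rewrite parallel_childE, inertia_swap_pt, <- (inertia_swap_pt W).
    now apply inertia_serial_child_le, is_TEC_swap_pt.
Qed.

Lemma descendant_cons (W : TEC) (b : bool) (l : list bool) :
  descendant W (b :: l) = descendant (child b W) l.
Proof. now destruct b. Qed.

Lemma descendant_rcons (W : TEC) (l : list bool) (b : bool) :
  descendant W (l ++ b :: nil) = child b (descendant W l).
Proof.
  revert W; induction l as [|c l IH]; intros W.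
  - now destruct b.
  - rewrite <- app_comm_cons, !descendant_cons; apply IH.
Qed.

Lemma is_TEC_descendant (W : TEC) (l : list bool) :
  is_TEC W -> is_TEC (descendant W l).
Proof.
  revert W; induction l as [|b l IH]; intros W HW; [exact HW|].
  rewrite descendant_cons; apply IH, is_TEC_child, HW.
Qed.

Lemma inertia_descendant_mul_length_le (W : TEC) (l : list bool) :
  is_TEC W -> inertia (descendant W l) * INR (length l) <= 3.
Proof.
  intros HW; induction l as [|b l IH] using rev_ind.
  - simpl; lra.
  - rewrite descendant_rcons, length_app, plus_INR; simpl (INR (length _)).
    apply (decay_mul_succ_le 3 (inertia (descendant W l))); try lra.
    + apply pos_INR.
    + apply inertia_ge0.
    + apply inertia_child_le, is_TEC_descendant, HW.
Qed.

Theorem mainTheorem3 (W : TEC) (HW : is_TEC W) :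
  exists C : R, forall (n : nat) (l : list bool),
    (1 <= n)%nat -> length l = n ->
    inertia (descendant W l) <= C / INR n.
Proof.
  exists 3; intros n l Hn Hl.
  pose proof (inertia_descendant_mul_length_le W l HW) as Hbound.
  rewrite Hl in Hbound.
  assert (HN : 0 < INR n) by (apply lt_0_INR; lia).
  apply (Rmult_le_reg_r (INR n)); [exact HN|].
  unfold Rdiv; rewrite Rmult_assoc, Rinv_l by lra; lra.
Qed.
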